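(* Let $c=\Big(8\sum_{j=1}^\infty\log^2(1+1/j)\Big)^{1/2}$. For every positive integer $t$ and all positive integers $a_1,\dots,a_t$, \[ \sum_{i=1}^t\log(a_i+1)\le\frac{c}{2}\Bigg(\sum_{i=1}^t i\,a_i\Bigg)^{1/2}. \] Moreover the constant $c/2$ is best possible: for every $c'<c/2$ there exist $t\ge1$ and positive integers $a_1,\dots,a_t$ with $\sum_{i=1}^t\log(a_i+1)>c'\big(\sum_{i=1}^t i a_i\big)^{1/2}$. *)

From Stdlib Require Import Reals.
Open Scope R_scope.

(* sum_{i=1}^t f i  (empty sum is 0 for t = 0) *)
Definition sum1 (t : nat) (f : nat -> R) : R :=
  match t with
  | O => 0
  | S t' => sum_f_R0 (fun k => f (S k)) t'
  end.

(* The series sum_{j>=1} log^2(1 + 1/j); its value S satisfies infinite_sum. *)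
Definition log2_series_term (k : nat) : R := (ln (1 + / INR (S k))) ^ 2.

Definition lhs3 (t : nat) (a : nat -> nat) : R :=
  sum1 t (fun i => ln (INR (a i) + 1)).

Definition wsum3 (t : nat) (a : nat -> nat) : R :=
  sum1 t (fun i => INR i * INR (a i)).

From Stdlib Require Import Reals Lra Lia Psatz ZArith.
Open Scope R_scope.

(* Write log(a + 1) = ell_1 + ... + ell_a and view [a] as a diagram whose row
   [i] has cells [(i, j)], [j <= a_i].  Summing column by column, the left side
   is [L = sum_j ell_j h_j] and the inner right side is [W = sum_j (sum of the indices
   of the rows meeting column j)], where [h_j] is the height of column [j].
   Upper bound: [sum_j h_j^2 <= 2 W] (adding a row of length [b] below [t] rows
   raises the left side by at most (2t+1) b), so by Cauchy-Schwarz
   [L^2 <= S * 2 W], i.e. [L <= (2 S W)^(1/2) = (c/2) W^(1/2)].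
   Optimality: take heights [h_j = ceil(N ell_j)] for [j <= M] and let [a] be
   the conjugate (row lengths) of this nonincreasing profile; then
   [L >= N Q] and [W <= N^2 Q / 2 + O(N M)] with [Q = sum_(j<=M) ell_j^2], so
   [L / W^(1/2)] tends to [(2 Q)^(1/2)], which is close to [c/2] for [M] large. *)

Lemma sum1_S n f : sum1 (S n) f = sum1 n f + f (S n).
Proof. destruct n; simpl; [ring | reflexivity]. Qed.

Lemma sum1_ext n f g :
  (forall i, (1 <= i <= n)%nat -> f i = g i) -> sum1 n f = sum1 n g.
Proof.
  induction n as [|n IH]; intros Hfg; [reflexivity|].
  rewrite !sum1_S, IH by (intros; apply Hfg; lia).
  rewrite Hfg by lia. reflexivity.
Qed.

Lemma sum1_plus n f g : sum1 n (fun i => f i + g i) = sum1 n f + sum1 n g.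
Proof. induction n as [|n IH]; [simpl; ring|]. rewrite !sum1_S, IH; ring. Qed.

Lemma sum1_scal n c f : sum1 n (fun i => c * f i) = c * sum1 n f.
Proof. induction n as [|n IH]; [simpl; ring|]. rewrite !sum1_S, IH; ring. Qed.

Lemma sum1_const n c : sum1 n (fun _ => c) = INR n * c.
Proof. induction n as [|n IH]; [simpl; ring|]. rewrite !sum1_S, IH, S_INR; ring. Qed.

Lemma sum1_le n f g :
  (forall i, (1 <= i <= n)%nat -> f i <= g i) -> sum1 n f <= sum1 n g.
Proof.
  induction n as [|n IH]; intros Hfg; [simpl; lra|].
  rewrite !sum1_S.
  assert (sum1 n f <= sum1 n g) by (apply IH; intros; apply Hfg; lia).
  assert (f (S n) <= g (S n)) by (apply Hfg; lia).
  lra.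
Qed.

Lemma sum1_nonneg n f :
  (forall i, (1 <= i <= n)%nat -> 0 <= f i) -> 0 <= sum1 n f.
Proof.
  intros Hf. replace 0 with (sum1 n (fun _ => 0)) by (rewrite sum1_const; ring).
  apply sum1_le; exact Hf.
Qed.

Lemma sum1_swap n m (f : nat -> nat -> R) :
  sum1 n (fun i => sum1 m (fun j => f i j)) = sum1 m (fun j => sum1 n (fun i => f i j)).
Proof.
  induction n as [|n IH].
  - simpl. rewrite sum1_const; ring.
  - rewrite sum1_S, IH, <- sum1_plus. apply sum1_ext. intros; rewrite sum1_S; reflexivity.
Qed.

Lemma sum1_truncate m k h :
  sum1 m (fun j => if Nat.leb j k then h j else 0) = sum1 (Nat.min k m) h.
Proof.
  induction m as [|m IH].
  - rewrite Nat.min_0_r. reflexivity.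
  - rewrite sum1_S, IH. destruct (Nat.leb_spec (S m) k).
    + rewrite (Nat.min_r k (S m)), (Nat.min_r k m) by lia. rewrite sum1_S; reflexivity.
    + rewrite (Nat.min_l k (S m)), (Nat.min_l k m) by lia. ring.
Qed.

Lemma sum1_indicator m k :
  sum1 m (fun j => if Nat.leb j k then 1 else 0) = INR (Nat.min k m).
Proof. rewrite (sum1_truncate m k (fun _ => 1)), sum1_const; ring. Qed.

Lemma sum1_id n : sum1 n INR = INR n * (INR n + 1) / 2.
Proof. induction n as [|n IH]; [simpl; field|]. rewrite sum1_S, IH, S_INR; field. Qed.

(* The increments [ell j = log(1 + 1/j)] of the logarithm at the integers. *)
Definition ell (j : nat) : R := ln (1 + / INR j).

Lemma ln_le x y : 0 < x -> x <= y -> ln x <= ln y.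
Proof.
  intros Hx Hxy. destruct (Rle_lt_or_eq_dec _ _ Hxy) as [Hlt|<-]; [|lra].
  left; apply ln_increasing; assumption.
Qed.

Lemma ell_pos j : (1 <= j)%nat -> 0 < ell j.
Proof.
  intros Hj. unfold ell. rewrite <- ln_1.
  assert (0 < / INR j) by (apply Rinv_0_lt_compat, lt_0_INR; lia).
  apply ln_increasing; lra.
Qed.

(* [log(1 + 1/j) <= 1/j <= 1], from [1 + x <= exp x]. *)
Lemma ell_le_1 j : (1 <= j)%nat -> ell j <= 1.
Proof.
  intros Hj. unfold ell.
  assert (1 <= INR j) by (apply (le_INR 1); lia).
  assert (0 < / INR j) by (apply Rinv_0_lt_compat; lra).
  assert (/ INR j <= 1) by (rewrite <- Rinv_1; apply Rinv_le_contravar; lra).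
  apply Rle_trans with (ln (exp 1)); [apply ln_le; [lra|] | rewrite ln_exp; lra].
  pose proof (exp_ineq1 1 ltac:(lra)). lra.
Qed.

Lemma ell_antitone k j : (1 <= k <= j)%nat -> ell j <= ell k.
Proof.
  intros Hkj. unfold ell.
  assert (1 <= INR k) by (apply (le_INR 1); lia).
  assert (INR k <= INR j) by (apply le_INR; lia).
  assert (/ INR j <= / INR k) by (apply Rinv_le_contravar; lra).
  assert (0 < / INR j) by (apply Rinv_0_lt_compat; lra).
  apply ln_le; lra.
Qed.

Lemma sum_ell a : sum1 a ell = ln (INR a + 1).
Proof.
  induction a as [|a IH].
  - simpl. rewrite Rplus_0_l, ln_1. reflexivity.
  - rewrite sum1_S, IH, S_INR. unfold ell. rewrite S_INR.
    pose proof (pos_INR a).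
    assert (0 < / (INR a + 1)) by (apply Rinv_0_lt_compat; lra).
    rewrite <- ln_mult by lra. f_equal. field. lra.
Qed.

(* Both sides of the inequality are sums over the cells [(i, j)], [j <= a i], of
   the "diagram" of [a]; reading them column by column needs a bound [M] on [a]. *)
Lemma bounded_prefix t (a : nat -> nat) :
  exists M, forall i, (1 <= i <= t)%nat -> (a i <= M)%nat.
Proof.
  induction t as [|t [M Ha]]; [exists O; intros; lia|].
  exists (Nat.max M (a (S t))). intros i Hi. destruct (Nat.eq_dec i (S t)) as [->|]; [lia|].
  specialize (Ha i ltac:(lia)). lia.
Qed.

Lemma sum_by_columns t (a : nat -> nat) M (g : nat -> nat -> R) :
  (forall i, (1 <= i <= t)%nat -> (a i <= M)%nat) ->
  sum1 t (fun i => sum1 (a i) (g i)) =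
  sum1 M (fun j => sum1 t (fun i => if Nat.leb j (a i) then g i j else 0)).
Proof.
  intros HM. rewrite <- sum1_swap. apply sum1_ext. intros i Hi.
  rewrite sum1_truncate, Nat.min_l by (apply HM; exact Hi). reflexivity.
Qed.

Definition column t (a : nat -> nat) j : R :=
  sum1 t (fun i => if Nat.leb j (a i) then 1 else 0).

Lemma column_bounds t a j : 0 <= column t a j <= INR t.
Proof.
  unfold column. split.
  - apply sum1_nonneg; intros; destruct (Nat.leb j (a i)); lra.
  - rewrite <- (Rmult_1_r (INR t)), <- sum1_const.
    apply sum1_le; intros; destruct (Nat.leb j (a i)); lra.
Qed.

Lemma lhs3_by_columns t a M : (forall i, (1 <= i <= t)%nat -> (a i <= M)%nat) ->
  lhs3 t a = sum1 M (fun j => ell j * column t a j).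
Proof.
  intros HM. unfold lhs3.
  rewrite (sum1_ext t _ (fun i => sum1 (a i) ((fun _ j => ell j) i)))
    by (intros; rewrite sum_ell; reflexivity).
  rewrite (sum_by_columns t a M _ HM).
  apply sum1_ext; intros j _. unfold column. rewrite <- sum1_scal.
  apply sum1_ext; intros i _. destruct (Nat.leb j (a i)); ring.
Qed.

Lemma wsum3_by_columns t a M : (forall i, (1 <= i <= t)%nat -> (a i <= M)%nat) ->
  wsum3 t a = sum1 M (fun j => sum1 t (fun i => if Nat.leb j (a i) then INR i else 0)).
Proof.
  intros HM. unfold wsum3.
  rewrite (sum1_ext t _ (fun i => sum1 (a i) ((fun i (_ : nat) => INR i) i)))
    by (intros; rewrite sum1_const; ring).
  apply (sum_by_columns t a M _ HM).
Qed.

(* The key combinatorial inequality [sum_j (column j)^2 <= 2 sum_i i a_i]: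
   adding row [t + 1] of length [b] raises the left side by
   [sum_(j <= b) (2 column j + 1) <= (2t + 1) b <= 2 (t + 1) b]. *)
Lemma sum_column_sq t a M : sum1 M (fun j => column t a j ^ 2) <= 2 * wsum3 t a.
Proof.
  induction t as [|t IH].
  - unfold column, wsum3; simpl.
    rewrite (sum1_ext M _ (fun _ => 0)) by (intros; simpl; ring).
    rewrite sum1_const; lra.
  - set (b := a (S t)).
    set (new j := if Nat.leb j b then 1 else 0).
    assert (Hcol : forall j, column (S t) a j = column t a j + new j)
      by (intros; unfold column; rewrite sum1_S; reflexivity).
    rewrite (sum1_ext M _ (fun j => column t a j ^ 2 + (2 * column t a j * new j + new j ^ 2)))
      by (intros; rewrite Hcol; ring).
    assert (Hinc : sum1 M (fun j => 2 * column t a j * new j + new j ^ 2)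
                   <= (2 * INR t + 1) * INR (Nat.min b M)).
    { rewrite <- sum1_indicator, <- sum1_scal. apply sum1_le; intros j _.
      pose proof (column_bounds t a j). unfold new. destruct (Nat.leb j b); lra. }
    assert (INR (Nat.min b M) <= INR b) by (apply le_INR; lia).
    unfold wsum3 in *. rewrite sum1_plus, sum1_S, S_INR. fold b.
    pose proof (pos_INR t). pose proof (pos_INR b). nra.
Qed.

Lemma quadratic_discriminant A B C :
  0 <= A -> (forall x, 0 <= A * x ^ 2 - 2 * B * x + C) -> B ^ 2 <= A * C.
Proof.
  intros HA Hq. destruct (Rle_lt_or_eq_dec _ _ HA) as [Apos | <-].
  - specialize (Hq (B / A)).
    replace (A * (B / A) ^ 2 - 2 * B * (B / A) + C) with ((A * C - B ^ 2) / A) in Hq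
      by (field; lra).
    assert (0 <= (A * C - B ^ 2) / A * A) by (apply Rmult_le_pos; lra).
    replace ((A * C - B ^ 2) / A * A) with (A * C - B ^ 2) in * by (field; lra).
    lra.
  - destruct (Req_dec B 0) as [-> | Bnz]; [lra|].
    specialize (Hq ((C + 1) / (2 * B))).
    replace (0 * ((C + 1) / (2 * B)) ^ 2 - 2 * B * ((C + 1) / (2 * B)) + C) with (-1) in Hq
      by (field; exact Bnz).
    lra.
Qed.

Lemma cauchy_schwarz M f g :
  (sum1 M (fun j => f j * g j)) ^ 2
  <= sum1 M (fun j => f j ^ 2) * sum1 M (fun j => g j ^ 2).
Proof.
  apply quadratic_discriminant.
  - apply sum1_nonneg; intros; apply pow2_ge_0.
  - intros x.
    assert (E : sum1 M (fun j => (x * f j - g j) ^ 2)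
                = sum1 M (fun j => f j ^ 2) * x ^ 2 - 2 * sum1 M (fun j => f j * g j) * x
                  + sum1 M (fun j => g j ^ 2)).
    { rewrite (sum1_ext M _ (fun j => x ^ 2 * f j ^ 2 + (-2 * x) * (f j * g j) + g j ^ 2))
        by (intros; ring).
      rewrite !sum1_plus, !sum1_scal. ring. }
    rewrite <- E. apply sum1_nonneg; intros; apply pow2_ge_0.
Qed.

Lemma partial_sum_series K :
  sum1 (S K) (fun j => ell j ^ 2) = sum_f_R0 log2_series_term K.
Proof. reflexivity. Qed.

Lemma partial_sum_le_series Ssum M : infinite_sum log2_series_term Ssum ->
  sum1 M (fun j => ell j ^ 2) <= Ssum.
Proof.
  intros HS.
  assert (Hterm : forall k, 0 <= log2_series_term k) by (intros; apply pow2_ge_0).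
  destruct M as [|K].
  - apply Rle_trans with (sum_f_R0 log2_series_term 0); [apply Hterm|].
    apply sum_incr; assumption.
  - rewrite partial_sum_series. apply sum_incr; assumption.
Qed.

Lemma series_pos Ssum : infinite_sum log2_series_term Ssum -> 0 < Ssum.
Proof.
  intros HS. pose proof (partial_sum_le_series Ssum 1 HS) as H1.
  simpl in H1. pose proof (ell_pos 1 (le_n 1)). nra.
Qed.

Lemma partial_sum_approx Ssum eps : infinite_sum log2_series_term Ssum -> 0 < eps ->
  exists M, (1 <= M)%nat /\ Ssum - eps < sum1 M (fun j => ell j ^ 2).
Proof.
  intros HS Heps. destruct (HS eps Heps) as [K HK].
  specialize (HK K (le_n K)). unfold Rdist in HK. apply Rabs_def2 in HK.
  exists (S K). rewrite partial_sum_series. split; [lia | lra].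
Qed.

Lemma sqrt_8_half Ssum : 0 <= Ssum -> sqrt (8 * Ssum) / 2 = sqrt (2 * Ssum).
Proof.
  intros HS. replace (8 * Ssum) with ((2 * 2) * (2 * Ssum)) by ring.
  rewrite sqrt_mult_alt, sqrt_square by lra. field.
Qed.

Lemma le_sqrt_of_sq x y : x ^ 2 <= y -> x <= sqrt y.
Proof.
  intros Hxy. destruct (Rle_lt_dec x 0) as [Hx|Hx].
  - pose proof (sqrt_pos y). lra.
  - rewrite <- (sqrt_pow2 x) by lra. apply sqrt_le_1_alt; exact Hxy.
Qed.

Lemma lt_mul_sqrt_of_sq c x y : 0 < x -> 0 <= y -> c ^ 2 * y < x ^ 2 -> c * sqrt y < x.
Proof.
  intros Hx Hy Hcyx. destruct (Rle_lt_dec c 0) as [Hc|Hc].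
  - pose proof (sqrt_pos y). nra.
  - rewrite <- (sqrt_pow2 c), <- sqrt_mult_alt, <- (sqrt_pow2 x) by nra.
    apply sqrt_lt_1_alt. split; [nra | exact Hcyx].
Qed.

(* The inequality, in squared form: by columns and Cauchy-Schwarz,
   [(sum_j ell j * column j)^2 <= (sum_j ell j ^ 2) (sum_j column j ^ 2) <= S * 2 W].
   No hypothesis on [t] or on the [a i] is needed. *)
Lemma lhs3_sq_le Ssum t a : infinite_sum log2_series_term Ssum ->
  lhs3 t a ^ 2 <= 2 * Ssum * wsum3 t a.
Proof.
  intros HS. destruct (bounded_prefix t a) as [M HM].
  rewrite (lhs3_by_columns t a M HM).
  pose proof (cauchy_schwarz M ell (column t a)) as Hcs.
  pose proof (partial_sum_le_series Ssum M HS) as Hell.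
  pose proof (sum_column_sq t a M) as Hcol.
  assert (0 <= sum1 M (fun j => ell j ^ 2)) by (apply sum1_nonneg; intros; apply pow2_ge_0).
  assert (0 <= sum1 M (fun j => column t a j ^ 2))
    by (apply sum1_nonneg; intros; apply pow2_ge_0).
  nra.
Qed.

Fixpoint count_upto (m : nat) (p : nat -> bool) : nat :=
  match m with
  | O => O
  | S m' => (count_upto m' p + (if p (S m') then 1 else 0))%nat
  end.

Lemma count_upto_le m p : (count_upto m p <= m)%nat.
Proof. induction m as [|m IH]; simpl; [lia|]. destruct (p (S m)); lia. Qed.

Lemma count_upto_initial m p :
  (forall k j, (1 <= k <= j)%nat -> (j <= m)%nat -> p j = true -> p k = true) ->
  forall j, (1 <= j <= m)%nat -> p j = Nat.leb j (count_upto m p).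
Proof.
  induction m as [|m IH]; intros Hdown j Hj; [lia|].
  assert (IHm : forall j, (1 <= j <= m)%nat -> p j = Nat.leb j (count_upto m p))
    by (apply IH; intros; eapply Hdown; eauto; lia).
  pose proof (count_upto_le m p). simpl.
  destruct (p (S m)) eqn:Elast.
  - assert (Hall : forall k, (1 <= k <= S m)%nat -> p k = true)
      by (intros; eapply Hdown; eauto; lia).
    assert (Hfull : count_upto m p = m).
    { destruct m as [|m']; [reflexivity|].
      pose proof (IHm (S m') ltac:(lia)) as Hm. rewrite Hall in Hm by lia.
      symmetry in Hm. apply Nat.leb_le in Hm. lia. }
    rewrite Hall by lia. symmetry. apply Nat.leb_le. lia.
  - destruct (Nat.eq_dec j (S m)) as [->|Hne].
    + rewrite Elast. symmetry. apply Nat.leb_gt. lia.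
    + rewrite IHm by lia. f_equal. lia.
Qed.

(* The conjugate of a nonincreasing sequence [n 1 >= ... >= n M]: the row
   lengths of the diagram whose column [j] has height [n j]. *)
Definition conjugate (M : nat) (n : nat -> nat) (i : nat) : nat :=
  count_upto M (fun j => Nat.leb i (n j)).

Section Conjugate.

Variables (M : nat) (n : nat -> nat).
Hypothesis M_pos : (1 <= M)%nat.
Hypothesis n_antitone :
  forall k j, (1 <= k <= j)%nat -> (j <= M)%nat -> (n j <= n k)%nat.

Lemma conjugate_cell i j : (1 <= j <= M)%nat ->
  Nat.leb j (conjugate M n i) = Nat.leb i (n j).
Proof.
  intros Hj. symmetry. apply (count_upto_initial M (fun j => Nat.leb i (n j))); [|exact Hj].
  intros k j' Hk Hj' Hp. apply Nat.leb_le in Hp; apply Nat.leb_le.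
  pose proof (n_antitone k j' Hk Hj'). lia.
Qed.

Lemma conjugate_pos i : (1 <= i <= n 1)%nat -> (1 <= conjugate M n i)%nat.
Proof.
  intros Hi. pose proof (conjugate_cell i 1 ltac:(lia)) as Hcell.
  rewrite (proj2 (Nat.leb_le i (n 1)) ltac:(lia)) in Hcell.
  apply Nat.leb_le in Hcell. exact Hcell.
Qed.

Lemma conjugate_bounded i : (conjugate M n i <= M)%nat.
Proof. apply count_upto_le. Qed.

Lemma n_le_first j : (1 <= j <= M)%nat -> (n j <= n 1)%nat.
Proof. intros Hj. apply n_antitone; lia. Qed.

(* In the diagram of the conjugate, the row [i] meets column [j] iff [i <= n j];
   so the LHS and RHS of the inequality are sums over the columns [j <= M]. *)
Lemma lhs3_conjugate :
  lhs3 (n 1) (conjugate M n) = sum1 M (fun j => ell j * INR (n j)).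
Proof.
  rewrite (lhs3_by_columns _ _ M) by (intros; apply conjugate_bounded).
  apply sum1_ext; intros j Hj. f_equal. unfold column.
  rewrite (sum1_ext _ _ (fun i => if Nat.leb i (n j) then 1 else 0))
    by (intros; rewrite conjugate_cell; auto).
  rewrite sum1_indicator, Nat.min_l by (apply n_le_first; exact Hj). reflexivity.
Qed.

Lemma wsum3_conjugate :
  wsum3 (n 1) (conjugate M n) = sum1 M (fun j => INR (n j) * (INR (n j) + 1) / 2).
Proof.
  rewrite (wsum3_by_columns _ _ M) by (intros; apply conjugate_bounded).
  apply sum1_ext; intros j Hj.
  rewrite (sum1_ext _ _ (fun i => if Nat.leb i (n j) then INR i else 0))
    by (intros; rewrite conjugate_cell; auto).
  rewrite sum1_truncate, Nat.min_l by (apply n_le_first; exact Hj). apply sum1_id.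
Qed.

End Conjugate.

(* The extremal profile: columns of height [ceil (N * ell j)], [j <= M]. *)
Definition scaled_height (N j : nat) : nat := Z.to_nat (up (INR N * ell j)).

Lemma scaled_height_bounds N j : (1 <= j)%nat ->
  INR N * ell j < INR (scaled_height N j) <= INR N * ell j + 1.
Proof.
  intros Hj. unfold scaled_height.
  pose proof (ell_pos j Hj). pose proof (pos_INR N).
  destruct (archimed (INR N * ell j)) as [Hup1 Hup2].
  assert (0 <= up (INR N * ell j))%Z by (apply le_IZR; nra).
  rewrite (INR_IZR_INZ (Z.to_nat _)), Z2Nat.id by lia. lra.
Qed.

Lemma up_monotone x y : x <= y -> (up x <= up y)%Z.
Proof.
  intros Hxy. destruct (archimed x) as [Hx1 Hx2]. destruct (archimed y) as [Hy1 Hy2].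
  destruct (Z_le_gt_dec (up x) (up y)) as [|Hgt]; [assumption|].
  assert (Hle : (up y <= up x - 1)%Z) by lia.
  apply IZR_le in Hle. rewrite minus_IZR in Hle. lra.
Qed.

Lemma scaled_height_antitone N k j : (1 <= k <= j)%nat ->
  (scaled_height N j <= scaled_height N k)%nat.
Proof.
  intros Hkj. unfold scaled_height.
  pose proof (ell_antitone k j Hkj). pose proof (pos_INR N).
  assert (Hup : (up (INR N * ell j) <= up (INR N * ell k))%Z)
    by (apply up_monotone; nra).
  lia.
Qed.

(* Since [n j >= N ell j], the left side is at least [N Q], [Q = sum_(j<=M) ell j ^ 2]. *)
Lemma scaled_lhs_ge N M :
  INR N * sum1 M (fun j => ell j ^ 2)
  <= sum1 M (fun j => ell j * INR (scaled_height N j)).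
Proof.
  rewrite <- sum1_scal. apply sum1_le; intros j Hj.
  pose proof (scaled_height_bounds N j ltac:(lia)). pose proof (ell_pos j ltac:(lia)).
  nra.
Qed.

(* Since [n j <= N ell j + 1] and [ell j <= 1], the weighted sum is at most
   [N^2 Q / 2 + 5 N M / 2]. *)
Lemma scaled_wsum_le N M : (1 <= N)%nat ->
  sum1 M (fun j => INR (scaled_height N j) * (INR (scaled_height N j) + 1) / 2)
  <= INR N ^ 2 / 2 * sum1 M (fun j => ell j ^ 2) + INR M * (5 * INR N / 2).
Proof.
  intros HN. rewrite <- sum1_scal, <- sum1_const, <- sum1_plus.
  apply sum1_le; intros j Hj.
  pose proof (scaled_height_bounds N j ltac:(lia)) as Hh.
  pose proof (ell_pos j ltac:(lia)). pose proof (ell_le_1 j ltac:(lia)).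
  assert (1 <= INR N) by (apply (le_INR 1); exact HN).
  set (x := INR (scaled_height N j)) in *. set (l := ell j) in *.
  assert (0 <= x) by apply pos_INR.
  assert (HNl : 0 <= INR N * l <= INR N) by (split; nra).
  assert (Hx : x * (x + 1) <= (INR N * l + 1) * (INR N * l + 2)).
  { assert (0 <= (INR N * l + 1 - x) * (INR N * l + 2 + x)) by (apply Rmult_le_pos; lra).
    nra. }
  nra.
Qed.

(* The final comparison: if [L >= N Q] and [W <= N^2 Q / 2 + 5 N M / 2] then
   [c^2 W <= N^2 Q^2 - N (N Q (2Q - c^2) - 5 c^2 M) / 2 < L^2] for [N] large. *)
Lemma estimates_beat c N M Q L W :
  0 < Q -> 0 < N -> 5 * c ^ 2 * M < N * (Q * (2 * Q - c ^ 2)) ->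
  N * Q <= L -> W <= N ^ 2 / 2 * Q + M * (5 * N / 2) ->
  0 < L /\ c ^ 2 * W < L ^ 2.
Proof.
  intros HQ HN Hlarge HL HW.
  assert (HNQ : 0 < N * Q) by nra.
  assert (HLsq : (N * Q) ^ 2 <= L ^ 2) by (apply pow_incr; lra).
  assert (Hgap : c ^ 2 * (N ^ 2 / 2 * Q + M * (5 * N / 2))
                 = (N * Q) ^ 2 - N / 2 * (N * (Q * (2 * Q - c ^ 2)) - 5 * c ^ 2 * M))
    by field.
  assert (c ^ 2 * W <= c ^ 2 * (N ^ 2 / 2 * Q + M * (5 * N / 2)))
    by (apply Rmult_le_compat_l; [apply pow2_ge_0 | exact HW]).
  split; nra.
Qed.

(* Sharpness: for [0 <= c] with [c^2 < 2 S] the scaled profile beats [c]: choose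
   [M] with [Q > c^2 / 2], then [N] large, and take the conjugate of the heights. *)
Lemma sharpness Ssum c : infinite_sum log2_series_term Ssum ->
  0 <= c -> c ^ 2 < 2 * Ssum ->
  exists (t : nat) (a : nat -> nat),
    (1 <= t)%nat /\ (forall i, (1 <= i <= t)%nat -> (1 <= a i)%nat) /\
    0 < lhs3 t a /\ c ^ 2 * wsum3 t a < lhs3 t a ^ 2.
Proof.
  intros HS Hc Hc2.
  destruct (partial_sum_approx Ssum (Ssum - c ^ 2 / 2) HS ltac:(lra)) as [M [HM HQ]].
  set (Q := sum1 M (fun j => ell j ^ 2)) in *.
  assert (HD : 0 < Q * (2 * Q - c ^ 2)) by nra.
  destruct (INR_unbounded (5 * c ^ 2 * INR M / (Q * (2 * Q - c ^ 2)))) as [N0 HN0].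
  set (N := S N0).
  assert (HN : 1 <= INR N) by (unfold N; rewrite S_INR; pose proof (pos_INR N0); lra).
  assert (Hlarge : 5 * c ^ 2 * INR M < INR N * (Q * (2 * Q - c ^ 2))).
  { apply Rlt_le_trans with (INR N0 * (Q * (2 * Q - c ^ 2))).
    - apply (Rmult_lt_compat_r (Q * (2 * Q - c ^ 2))) in HN0; [|exact HD].
      unfold Rdiv in HN0. rewrite Rmult_assoc, Rinv_l, Rmult_1_r in HN0; lra.
    - apply Rmult_le_compat_r; [lra|]. apply le_INR. unfold N. lia. }
  set (n := scaled_height N).
  assert (Hn1 : (1 <= n 1)%nat).
  { pose proof (scaled_height_bounds N 1 (le_n 1)). pose proof (ell_pos 1 (le_n 1)).
    assert (Hpos : INR 0 < INR (n 1%nat)) by (simpl INR at 1; unfold n; nra).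
    apply INR_lt in Hpos. lia. }
  assert (Hanti : forall k j, (1 <= k <= j)%nat -> (j <= M)%nat -> (n j <= n k)%nat)
    by (intros; apply scaled_height_antitone; lia).
  exists (n 1%nat), (conjugate M n). split; [exact Hn1|]. split.
  { intros i Hi. apply conjugate_pos; assumption. }
  rewrite lhs3_conjugate, wsum3_conjugate by assumption.
  apply (estimates_beat c (INR N) (INR M) Q); [nra | lra | exact Hlarge | |].
  - apply scaled_lhs_ge.
  - apply scaled_wsum_le. unfold N. lia.
Qed.

Theorem lemma3p3 :
  forall Ssum : R,
    infinite_sum log2_series_term Ssum ->
    let c := sqrt (8 * Ssum) in
    (forall (t : nat) (a : nat -> nat),
        (1 <= t)%nat ->
        (forall i, (1 <= i <= t)%nat -> (1 <= a i)%nat) ->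
        lhs3 t a <= c / 2 * sqrt (wsum3 t a))
    /\
    (forall c' : R, c' < c / 2 ->
        exists (t : nat) (a : nat -> nat),
          (1 <= t)%nat /\
          (forall i, (1 <= i <= t)%nat -> (1 <= a i)%nat) /\
          lhs3 t a > c' * sqrt (wsum3 t a)).
Proof.
  intros Ssum HS c. pose proof (series_pos Ssum HS) as HSpos.
  unfold c. rewrite sqrt_8_half by lra. split.
  - intros t a _ _. rewrite <- sqrt_mult_alt by lra.
    apply le_sqrt_of_sq, lhs3_sq_le, HS.
  - intros c' Hc'.
    set (c0 := Rmax c' 0).
    assert (Hc0 : 0 <= c0) by apply Rmax_r.
    assert (Hc0lt : c0 < sqrt (2 * Ssum))
      by (apply Rmax_lub_lt; [lra | apply sqrt_lt_R0; lra]).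
    assert (Hc0sq : c0 ^ 2 < 2 * Ssum)
      by (pose proof (sqrt_sqrt (2 * Ssum) ltac:(lra)); nra).
    destruct (sharpness Ssum c0 HS Hc0 Hc0sq) as (t & a & Ht & Ha & HL & Hbeat).
    exists t, a. split; [exact Ht|]. split; [exact Ha|].
    assert (HW : 0 <= wsum3 t a)
      by (apply sum1_nonneg; intros; apply Rmult_le_pos; apply pos_INR).
    pose proof (lt_mul_sqrt_of_sq c0 _ _ HL HW Hbeat).
    assert (c' * sqrt (wsum3 t a) <= c0 * sqrt (wsum3 t a))
      by (apply Rmult_le_compat_r; [apply sqrt_pos | apply Rmax_l]).
    lra.
Qed.
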